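(* Let $\mu \in \mathbb{R}$, $\sigma_u^2 > 0$ and $V > 0$ be fixed, and let $F(\cdot, V)$ be the function of $b \in \mathbb{R}$ defined by \[ F(b,V) = \begin{cases} \displaystyle\int_{\mu}^\infty \Big[1 - \Phi \Big( \frac{- b(u - \mu)}{\sqrt{V - b^2 \sigma_u^2}}\Big) \Big] p(u)\, du, & - \sqrt{V/\sigma_u^2} < b < \sqrt{V/\sigma_u^2}, \\[2mm] \int_{\mu}^\infty p(u)\, du = \tfrac{1}{2}, & b \geq \sqrt{V/\sigma_u^2}, \\[1mm] 0, & b \leq - \sqrt{V/\sigma_u^2}. \end{cases} \] Then $b \mapsto F(b,V)$ is strictly monotonically increasing on the open interval $\left(- \sqrt{V/\sigma_u^2},\ \sqrt{V/\sigma_u^2}\right)$.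
   Context: $\Phi(x) = \int_{-\infty}^x \frac{1}{\sqrt{2\pi}} e^{-s^2/2}\, ds$ is the standard normal cumulative distribution function, and $p(u) = \frac{1}{\sqrt{2\pi\sigma_u^2}} \exp\!\left(-\frac{(u-\mu)^2}{2\sigma_u^2}\right)$ is the density of a $\mathcal{N}(\mu,\sigma_u^2)$ random variable. *)

From HB Require Import structures.
From mathcomp Require Import all_boot all_order all_algebra.
From mathcomp Require Import all_classical all_reals all_analysis.
Set Implicit Arguments. Unset Strict Implicit. Unset Printing Implicit Defensive.
Import Order.TTheory GRing.Theory Num.Theory.
Local Open Scope classical_set_scope.
Local Open Scope ring_scope.

Definition std_gauss {R : realType} (s : R) : R :=
  (Num.sqrt (pi *+ 2))^-1 * expR (- (s ^+ 2) / 2).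

Definition Phi {R : realType} (x : R) : R :=
  Rintegral lebesgue_measure `]-oo, x] std_gauss.

(* density of N(mu, su2), su2 = sigma_u^2 the variance *)
Definition pdens {R : realType} (mu su2 u : R) : R :=
  (Num.sqrt (pi *+ 2 * su2))^-1 * expR (- ((u - mu) ^+ 2) / (su2 *+ 2)).

Definition Ffun {R : realType} (mu su2 V b : R) : R :=
  let c := Num.sqrt (V / su2) in
  if (- c < b) && (b < c) then
    Rintegral lebesgue_measure `[mu, +oo[
      (fun u => (1 - Phi (- b * (u - mu) / Num.sqrt (V - b ^+ 2 * su2))) * pdens mu su2 u)
  else if c <= b then 1 / 2 else 0.

(** Writing [k b = b / sqrt (V - b^2 su2)], the argument of [Phi] is
    [- (u - mu) * k b], so inside the interval [F(b, V)] is the integral over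
    [u >= mu] of [(1 - Phi (- (u - mu) * k)) * p u] evaluated at [k = k b].
    The slope [k b] is strictly increasing in [b], and for [u > mu] the
    integrand is strictly increasing in [k] because [Phi] is strictly
    increasing (the Gaussian density is positive); since [p] is positive and
    [(mu, +oo)] has positive Lebesgue measure, the integral is strictly
    increasing in [k]. *)

From HB Require Import structures.
From mathcomp Require Import all_boot all_order all_algebra.
From mathcomp Require Import all_classical all_reals all_analysis.
From mathcomp Require Import measurable_realfun.
From mathcomp Require Import ring lra.
Import Order.TTheory GRing.Theory Num.Theory.
Local Open Scope classical_set_scope.
Local Open Scope ring_scope.

Section Rintegral_strict.
Context {d} {T : measurableType d} {R : realType} {mu : {measure set T -> \bar R}}.

Lemma Rintegral_gt0 {D E : set T} {f : T -> R} :
  measurable D -> measurable E -> E `<=` D ->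
  mu.-integrable D (EFin \o f) ->
  (forall x, D x -> 0 <= f x) -> (forall x, E x -> 0 < f x) ->
  (0 < mu E)%E -> 0 < \int[mu]_(x in D) f x.
Proof.
move=> mD mE ED intf f0 fE muE.
have I0 : (0 <= \int[mu]_(x in D) (f x)%:E)%E.
  by apply: integral_ge0 => x Dx; rewrite lee_fin f0.
rewrite /Rintegral fine_gt0 // -ge0_fin_numE // integrable_fin_num // andbT.
rewrite lt0e I0 andbT; apply/negP => /eqP If0.
have [N [mN N0 fN]] : ae_eq mu D (EFin \o f) (cst 0%E).
  apply/(ae_eq_integral_abs mu mD (measurable_int mu intf)); rewrite -If0.
  by apply: eq_integral => x /set_mem Dx /=; rewrite ger0_norm // f0.
suff : mu E = 0%E by move=> E0; rewrite E0 ltxx in muE.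
apply: (subset_measure0 mE mN) => // x Ex; apply: fN => /= /(_ (ED x Ex)) [fx0].
by have := fE x Ex; rewrite fx0 ltxx.
Qed.

Lemma lt_Rintegral {D E : set T} {f g : T -> R} :
  measurable D -> measurable E -> E `<=` D ->
  mu.-integrable D (EFin \o f) -> mu.-integrable D (EFin \o g) ->
  (forall x, D x -> f x <= g x) -> (forall x, E x -> f x < g x) ->
  (0 < mu E)%E -> \int[mu]_(x in D) f x < \int[mu]_(x in D) g x.
Proof.
move=> mD mE ED intf intg fg fgE muE.
rewrite -subr_gt0 -RintegralB //.
apply: (Rintegral_gt0 (f := fun x => g x - f x) mD mE ED) => //.
- exact: (integrableB mD intg intf).
- by move=> x Dx; rewrite subr_ge0 fg.
- by move=> x Ex; rewrite subr_gt0 fgE.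
Qed.

End Rintegral_strict.

Section Gaussian.
Context {R : realType}.
Notation leb := (@lebesgue_measure R).

Lemma std_gaussE : @std_gauss R = normal_pdf 0 1.
Proof.
apply/funext => x; rewrite normal_pdfE ?oner_neq0 //.
by rewrite /std_gauss /normal_peak /normal_fun expr1n mul1r subr0.
Qed.

Lemma std_gauss_gt0 (x : R) : 0 < std_gauss x.
Proof. by rewrite mulr_gt0 ?expR_gt0 // invr_gt0 sqrtr_gt0 pmulrn_lgt0 // pi_gt0. Qed.

Lemma integrable_std_gauss (A : set (measurableTypeR R)) : measurable A ->
  leb.-integrable A (EFin \o std_gauss).
Proof.
move=> mA; apply: (integrableS measurableT mA (subsetT _)).
by rewrite std_gaussE; exact: integrable_normal_pdf.
Qed.

Lemma Phi_ge0 (x : R) : 0 <= Phi x.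
Proof. by apply: Rintegral_ge0 => y _; exact/ltW/std_gauss_gt0. Qed.

Lemma Phi_le1 (x : R) : Phi x <= 1.
Proof.
have -> : 1 = \int[leb]_(y in [set: R]) std_gauss y.
  by rewrite /Rintegral std_gaussE integral_normal_pdf.
rewrite /Phi /Rintegral fine_le ?integrable_fin_num ?integrable_std_gauss //.
apply: ge0_subset_integral => // [|y _]; last by rewrite lee_fin ltW ?std_gauss_gt0.
by apply/measurable_EFinP; rewrite std_gaussE; exact: measurable_normal_pdf.
Qed.

Lemma Phi_homo_lt : {homo @Phi R : x y / x < y}.
Proof.
move=> x y xy; rewrite -subr_gt0 /Phi Rintegral_itvB ?bnd_simp ?ltW //;
  last exact: integrable_std_gauss.
apply: (@Rintegral_gt0 _ (measurableTypeR R) _ _ `]x, y] `]x, y]) => //.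
- exact: integrable_std_gauss.
- by move=> z _; exact: std_gauss_gt0.
- by rewrite /= lebesgue_measure_itv /= lte_fin xy -EFinD lte_fin subr_gt0.
Qed.

Lemma Phi_homo_le : {homo @Phi R : x y / x <= y}.
Proof. exact: ltW_homo Phi_homo_lt. Qed.

Lemma measurable_Phi : measurable_fun [set: R] (@Phi R).
Proof. exact: nondecreasing_measurable Phi_homo_le. Qed.

Lemma pdensE (m su2 : R) : 0 < su2 -> pdens m su2 = normal_pdf m (Num.sqrt su2).
Proof.
move=> su2_gt0; apply/funext => x; rewrite normal_pdfE ?gt_eqF ?sqrtr_gt0 //.
by rewrite /pdens /normal_peak /normal_fun sqr_sqrtr ?ltW // mulrnAl (mulrC pi).
Qed.

Lemma pdens_gt0 (m su2 u : R) : 0 < su2 -> 0 < pdens m su2 u.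
Proof.
move=> su2_gt0; rewrite /pdens mulr_gt0 ?expR_gt0 // invr_gt0 sqrtr_gt0.
by rewrite mulr_gt0 // pmulrn_lgt0 // pi_gt0.
Qed.

End Gaussian.

Section tail_probability.
Context {R : realType} (mu su2 : R).
Hypothesis su2_gt0 : 0 < su2.
Notation leb := (@lebesgue_measure R).

Definition tail_prob (k : R) : R :=
  \int[leb]_(u in `[mu, +oo[) ((1 - Phi (- (u - mu) * k)) * pdens mu su2 u).

Lemma integrable_tail_prob (k : R) : leb.-integrable `[mu, +oo[
  (EFin \o (fun u => (1 - Phi (- (u - mu) * k)) * pdens mu su2 u)).
Proof.
have mI : measurable (`[mu, +oo[ : set (measurableTypeR R)) by [].
apply: (le_integrable mI (g := EFin \o pdens mu su2)).
- apply/measurable_EFinP/measurable_funM; last first.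
    by rewrite pdensE //; exact: measurable_funS (measurable_normal_pdf _ _).
  apply/measurable_funB/(measurableT_comp measurable_Phi) => //.
  by apply: measurable_funM => //; apply: measurable_funN; exact: measurable_funB.
- move=> u _ /=; rewrite lee_fin normrM ler_piMl // ger0_norm ?subr_ge0 ?Phi_le1 //.
  by rewrite gerBl Phi_ge0.
- apply: (integrableS measurableT mI (subsetT _)).
  by rewrite pdensE //; exact: integrable_normal_pdf.
Qed.

Lemma tail_prob_homo_lt : {homo tail_prob : k1 k2 / k1 < k2}.
Proof.
move=> k1 k2 k12.
apply: (@lt_Rintegral _ (measurableTypeR R) _ _ `[mu, +oo[ `]mu, +oo[) => //.
- by move=> u /=; rewrite !in_itv /= !andbT => /ltW.
- exact: integrable_tail_prob.
- exact: integrable_tail_prob.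
- move=> u /=; rewrite in_itv /= andbT => hu.
  rewrite ler_pM2r ?pdens_gt0 // lerD2l lerN2; apply: Phi_homo_le.
  by rewrite !mulNr lerN2; apply: ler_wpM2l; [rewrite subr_ge0 | exact: ltW].
- move=> u /=; rewrite in_itv /= andbT => hu.
  rewrite ltr_pM2r ?pdens_gt0 // ltrD2l ltrN2; apply: Phi_homo_lt.
  by rewrite !mulNr ltrN2 ltr_pM2l // subr_gt0.
- by rewrite /= lebesgue_measure_itv /= ltry addye.
Qed.

End tail_probability.

Section slope.
Context {R : realType} (su2 V : R).

Definition slope (b : R) : R := b / Num.sqrt (V - b ^+ 2 * su2).

Lemma subr_sqrM_gt0 (b : R) : 0 < su2 ->
  - Num.sqrt (V / su2) < b -> b < Num.sqrt (V / su2) -> 0 < V - b ^+ 2 * su2.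
Proof.
move=> su2_gt0 lob bhi; rewrite subr_gt0 -ltr_pdivlMr //.
have V_ge0 : 0 <= V / su2.
  by rewrite ltW // -sqrtr_gt0; set c := Num.sqrt _ in lob bhi *; lra.
by rewrite -(sqr_sqrtr V_ge0); set c := Num.sqrt _ in lob bhi *; nra.
Qed.

Lemma slope_lt (b1 b2 : R) : 0 <= su2 ->
  0 < V - b1 ^+ 2 * su2 -> 0 < V - b2 ^+ 2 * su2 -> b1 < b2 -> slope b1 < slope b2.
Proof.
move=> su2_ge0 gap1 gap2 b12.
have s1_gt0 : 0 < Num.sqrt (V - b1 ^+ 2 * su2) by rewrite sqrtr_gt0.
have s2_gt0 : 0 < Num.sqrt (V - b2 ^+ 2 * su2) by rewrite sqrtr_gt0.
rewrite /slope ltr_pdivrMr // mulrAC ltr_pdivlMr //.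
have sqrt_gap_le (a a' : R) : a ^+ 2 <= a' ^+ 2 -> 0 < V - a ^+ 2 * su2 ->
    Num.sqrt (V - a' ^+ 2 * su2) <= Num.sqrt (V - a ^+ 2 * su2).
  by move=> aa' gap; rewrite ler_sqrt ?(ltW gap) // lerD2l lerN2 ler_wpM2r.
move: s1_gt0 s2_gt0 (sqrt_gap_le b1 b2) (sqrt_gap_le b2 b1).
set s1 := Num.sqrt _; set s2 := Num.sqrt _ => s1_gt0 s2_gt0 s21 s12.
have [b1_ge0|b1_lt0] := leP 0 b1.
  by have := s21 ltac:(nra) gap1; nra.
have [b2_ge0|b2_lt0] := leP 0 b2; first by nra.
by have := s12 ltac:(nra) gap2; nra.
Qed.

End slope.

Lemma Ffun_tail_prob (R : realType) (mu su2 V b : R) :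
  - Num.sqrt (V / su2) < b -> b < Num.sqrt (V / su2) ->
  Ffun mu su2 V b = tail_prob mu su2 (slope su2 V b).
Proof.
move=> lob bhi; rewrite /Ffun lob bhi /=.
by apply: eq_Rintegral => u _; congr ((1 - Phi _) * _); rewrite /slope; ring.
Qed.

Theorem lemma1 (R : realType) (mu su2 V : R) (hsu2 : 0 < su2) (hV : 0 < V) :
  forall b1 b2 : R,
    - Num.sqrt (V / su2) < b1 -> b2 < Num.sqrt (V / su2) -> b1 < b2 ->
    Ffun mu su2 V b1 < Ffun mu su2 V b2.
Proof.
move=> b1 b2 lob1 b2hi b12.
have b1hi : b1 < Num.sqrt (V / su2) by exact: lt_trans b12 b2hi.
have lob2 : - Num.sqrt (V / su2) < b2 by exact: lt_trans lob1 b12.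
rewrite !Ffun_tail_prob //; apply: tail_prob_homo_lt => //.
by apply: slope_lt => //; [exact: ltW | exact: subr_sqrM_gt0 ..].
Qed.
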